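(* Let $t$ be a positive integer. For every integer $n\ge8$ and every $n$-vertex induced subgraph $G$ of $\mathcal T(G_t)$ (hence in particular of $W_t$), there is a node $u$ of $T_t$ such that the number of descendants of $u$ in $T_t$ that belong to $V(G)$ is at least $\frac{n}{8\cdot 3^{t+1}}$ and at most $\frac n4$, and every node $v$ of $T_t$ in the same layer as $u$ has at most $\frac n4$ descendants in $V(G)$.
   Context: A node is its own descendant. Construction of $G_t$, $T_t$, $W_t$: a countably infinite trigraph $G_t$ (with disjoint sets of black and red edges; its total graph $\mathcal T(G_t)$ has all black and red edges, its real graph $W_t$ only the black ones) and rooted tree $T_t$ on the same vertex set, partitioned into finite layers $L_0,L_1,\dots$ each inducing a left-to-right path of black edges. $L_0$ is a single vertex, the root of $T_t$. With $L_{\le i}=L_0\cup\dots\cup L_i$, layer $L_{i+1}$ is built (starting empty) as follows: for each $u\in L_i$ from left to right, let $N^\uparrow[u]:=(N_{\mathcal T(G_t)}(u)\cap L_{\le i-1})\cup\{u\}$; for every ordered pair $(B,R)$ of disjoint subsets of $N^\uparrow[u]$ with $|B\cup R|\le t$, append a new vertex $v_{B,R}$ at the right end of $L_{i+1}$, joined by a black edge to the previously rightmost vertex of $L_{i+1}$ (if any), make it a child of $u$ in $T_t$, and add black edges from $v_{B,R}$ to all of $B$ and red edges to all of $R$. *)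

From mathcomp Require Import all_boot.
Set Implicit Arguments. Unset Strict Implicit. Unset Printing Implicit Defensive.

(* A vertex is the list of "choices" along the tree path from it up to the
   root, most recent choice first: the root is [::], and the child v_{B,R}
   of u is  l :: u  where l : seq nat is a label vector indexed by the
   (duplicate-free) sequence  up u  enumerating N^up[u]:
     label 0 = not in B∪R, label 1 = in B (black edge), label 2 = in R (red edge).
   The layer of a vertex is its size (depth in T_t). *)
Definition node := seq (seq nat).

(* up u enumerates N^up[u] = (N_{T(G_t)}(u) ∩ L_{<= i-1}) ∪ {u}, u ∈ L_i.
   The neighbours of u in earlier layers are exactly the vertices of B ∪ R
   chosen when u was created (edges created later go to later layers, and
   path edges stay inside a layer), which is what this computes. *)
Fixpoint up (u : node) : seq node :=
  match u with
  | [::] => [:: [::]]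
  | l :: p => (l :: p) :: mask (map (fun a => a != 0) l) (up p)
  end.

Fixpoint valid (t : nat) (x : node) : bool :=
  match x with
  | [::] => true
  | l :: p => [&& valid t p, size l == size (up p),
                  all (fun a => a < 3) l & count (fun a => a != 0) l <= t]
  end.

Definition labof (x y : node) : nat :=
  match x with
  | [::] => 0
  | l :: p => if y \in up p then nth 0 l (index y (up p)) else 0
  end.

(* Left-to-right order inside a layer: children of u come in the block of u
   (blocks ordered as their parents), and inside a block the pairs (B,R) are
   appended in lexicographic order of their label vectors (the paper leaves
   this order unspecified; it is irrelevant to the statement). *)
Fixpoint lexlt (a b : seq nat) : bool :=
  match a, b with
  | x :: a', y :: b' => (x < y) || ((x == y) && lexlt a' b')
  | [::], _ :: _ => true
  | _, _ => false
  end.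

Fixpoint leftof (x y : node) : bool :=
  match x, y with
  | l :: p, l' :: p' => leftof p p' || ((p == p') && lexlt l l')
  | _, _ => false
  end.

Definition path_edge (t : nat) (x y : node) : Prop :=
  valid t x /\ valid t y /\ size x = size y /\
  (leftof x y \/ leftof y x) /\
  ~ (exists z, valid t z /\ size z = size x /\
       ((leftof x z /\ leftof z y) \/ (leftof y z /\ leftof z x))).

Definition black_edge (t : nat) (x y : node) : Prop :=
  path_edge t x y \/
  (valid t x /\ valid t y /\ (labof x y = 1 \/ labof y x = 1)).

Definition red_edge (t : nat) (x y : node) : Prop :=
  valid t x /\ valid t y /\ (labof x y = 2 \/ labof y x = 2).

Definition total_edge (t : nat) (x y : node) : Prop :=
  black_edge t x y \/ red_edge t x y.
Definition real_edge (t : nat) (x y : node) : Prop := black_edge t x y.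

(* v is a descendant of u in T_t (a node is its own descendant). *)
Definition desc (v u : node) : bool := suffix u v.

Definition ndesc (S : seq node) (u : node) : nat := count (fun v => desc v u) S.

From mathcomp Require Import all_boot zify.

Set Implicit Arguments.
Unset Strict Implicit.
Unset Printing Implicit Defensive.

(* Take a deepest node w of T_t with more than n/4 descendants in V(G); then
   every node of the next layer has at most n/4 of them.  A child of w is a
   labelling of N^up[w] by {absent, black, red} and |N^up[w]| <= t+1, so w has
   at most 3^(t+1) children, among which its descendants other than w itself
   are shared.  Hence some child carries at least (n/4 - 1)/3^(t+1) of them,
   which is at least n/(8*3^(t+1)) because n >= 8. *)

Lemma exists_argmax_seq (T : eqType) (s : seq T) (F : T -> nat) : s != [::] ->
  exists2 x, x \in s & forall y, y \in s -> F y <= F x.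
Proof.
elim: s => // a [|b s] IH _.
  by exists a => [|y]; rewrite ?inE // => /eqP ->.
have [//|x xs maxx] := IH.
have [lt_ax | le_xa] := ltnP (F a) (F x).
  exists x => [|y]; first by rewrite inE xs orbT.
  by rewrite inE => /predU1P[->|/maxx]; [exact: ltnW|].
exists a => [|y]; first exact: mem_head.
by rewrite inE => /predU1P[->//|/maxx/leq_trans]; apply.
Qed.

Lemma exists_sum_leq_size_mul (T : eqType) (s : seq T) (F : T -> nat) :
  s != [::] -> exists2 x, x \in s & \sum_(y <- s) F y <= size s * F x.
Proof.
move=> /(exists_argmax_seq F)[x xs maxx]; exists x => //.
rewrite -sum1_size big_distrl big_seq [leqRHS]big_seq.
by apply: leq_sum => y ys; rewrite /= mul1n maxx.
Qed.

Lemma valid_suffix t u x : valid t x -> suffix u x -> valid t u.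
Proof.
move=> + /suffixP[s xE]; rewrite {}xE.
by elim: s => //= l s IH /and4P[/IH].
Qed.

Lemma size_up_valid t w : valid t w -> size (up w) <= t.+1.
Proof.
by case: w => //= l p /and4P[_ /eqP sl _]; rewrite ltnS size_mask ?size_map ?count_map.
Qed.

Lemma ndesc_gt0_valid t S u : all (valid t) S -> 0 < ndesc S u -> valid t u.
Proof.
by move=> /allP validS; rewrite -has_count => /hasP[x /validS]; apply: valid_suffix.
Qed.

Definition ancestors (x : node) : seq node :=
  [seq drop i x | i <- iota 0 (size x).+1].

Lemma mem_ancestors x u : (u \in ancestors x) = desc x u.
Proof.
apply/mapP/idP => [[i _ ->]|]; first exact: suffix_drop.
rewrite /desc suffixE => /eqP <-; exists (size x - size u) => //.
by rewrite mem_iota ltnS leq_subr.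
Qed.

Lemma ndesc_gt0_mem_ancestors S u :
  0 < ndesc S u -> u \in flatten (map ancestors S).
Proof.
by rewrite -has_count => /hasP[x xS xu]; apply/flatten_mapP; exists x; rewrite ?mem_ancestors.
Qed.

Lemma deepest_heavy k n (S : seq node) : n < k * size S ->
  exists w, n < k * ndesc S w /\
    forall v, size v = (size w).+1 -> k * ndesc S v <= n.
Proof.
move=> heavy_root.
pose H := [seq u <- flatten (map ancestors S) | n < k * ndesc S u].
have heavy_gt0 u : n < k * ndesc S u -> 0 < ndesc S u.
  by case: (ndesc S u) => //; rewrite muln0.
have memH u : n < k * ndesc S u -> u \in H.
  by move=> hu; rewrite mem_filter hu ndesc_gt0_mem_ancestors ?heavy_gt0.
have ndesc_root : ndesc S [::] = size S.
  by rewrite /ndesc (eq_count (a2 := predT)) ?count_predT // => x; exact: suffix0s.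
have root_heavy : [::] \in H by rewrite memH ?ndesc_root.
have /(exists_argmax_seq size)[w] : H != [::] by apply: contraTneq root_heavy => ->.
rewrite mem_filter => /andP[heavy_w _] deepest; exists w; split=> // v sv.
by rewrite leqNgt; apply/negP => /memH /deepest; rewrite sv ltnn.
Qed.

Fixpoint labels (m : nat) : seq (seq nat) :=
  if m is m'.+1 then [seq a :: l | a <- iota 0 3, l <- labels m'] else [:: [::]].

Lemma labelsS m : labels m.+1 = [seq a :: l | a <- iota 0 3, l <- labels m].
Proof. by []. Qed.

Lemma size_labels m : size (labels m) = 3 ^ m.
Proof. by elim: m => // m IH; rewrite labelsS size_allpairs IH expnS. Qed.

Lemma mem_labels l : all (fun a => a < 3) l -> l \in labels (size l).
Proof.
elim: l => // a l IH /andP[a3 l3].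
by rewrite labelsS; apply: allpairs_f; rewrite ?mem_iota ?IH.
Qed.

Definition children (w : node) : seq node :=
  [seq l :: w | l <- labels (size (up w))].

Lemma size_children w : size (children w) = 3 ^ size (up w).
Proof. by rewrite size_map size_labels. Qed.

Lemma size_mem_children w c : c \in children w -> size c = (size w).+1.
Proof. by case/mapP=> l _ ->. Qed.

Lemma proper_desc_children t x w : valid t x -> desc x w -> x != w ->
  exists2 c, c \in children w & desc x c.
Proof.
move=> vx /suffixP[s xE]; rewrite {}xE in vx *.
case/lastP: s vx => [|s l] vx; first by rewrite eqxx.
rewrite cat_rcons in vx * => _; exists (l :: w); last exact: suffix_suffix.
have /= /and4P[_ /eqP sl l3 _] := valid_suffix vx (suffix_suffix s (l :: w)).
by rewrite /children -sl map_f ?mem_labels.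
Qed.

Lemma ndesc_leq_children t S w : all (valid t) S ->
  ndesc S w <= count_mem w S + \sum_(c <- children w) ndesc S c.
Proof.
rewrite /ndesc; elim: S => [|x S IH] /=; first by rewrite big1_seq.
case/andP=> vx /IH {}IH; rewrite big_split /= addnACA leq_add //.
have [-> | xNw] := eqVneq x w; first by rewrite (leq_trans (leq_b1 _)) ?leq_addr.
case xw: (desc x w) => //.
have [c cw xc] := proper_desc_children vx xw xNw.
by rewrite (big_rem c cw) xc.
Qed.

Theorem lemma4p8 (t : nat) (ht : 0 < t) (n : nat) (hn : 8 <= n) (S : seq node) :
  uniq S -> size S = n -> all (valid t) S ->
  exists u : node,
    [/\ valid t u,
        n <= 8 * 3 ^ t.+1 * ndesc S u,
        4 * ndesc S u <= n &
        forall v : node, valid t v -> size v = size u -> 4 * ndesc S v <= n].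
Proof.
move=> uniqS sizeS validS.
have /deepest_heavy[w [heavy_w light_below_w]] : n < 4 * size S.
  by rewrite sizeS; lia.
have /(exists_sum_leq_size_mul (ndesc S))[c cw sum_children] : children w != [::].
  by rewrite -size_eq0 size_children expn_eq0.
have few_children : size (children w) <= 3 ^ t.+1.
  rewrite size_children leq_exp2l // size_up_valid // (ndesc_gt0_valid validS) //.
  by case: (ndesc S w) heavy_w.
have ndesc_w : ndesc S w <= 1 + 3 ^ t.+1 * ndesc S c.
  rewrite (leq_trans (ndesc_leq_children w validS)) // leq_add //.
    by rewrite count_uniq_mem ?leq_b1.
  by rewrite (leq_trans sum_children) // leq_mul2r few_children orbT.
have heavy_c : n <= 8 * 3 ^ t.+1 * ndesc S c by rewrite -mulnA; lia.
have size_c := size_mem_children cw.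
exists c; split=> //.
- apply: (ndesc_gt0_valid validS); rewrite lt0n; apply: contraTneq heavy_c => ->.
  by rewrite muln0 -ltnNge (leq_trans _ hn).
- exact: light_below_w.
- by move=> v _ sv; apply: light_below_w; rewrite sv.
Qed.
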